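(* There exists a closed, non-separable linear subspace $M\subset\ell^\infty$ such that every non-zero $x\in M$ has exactly countably infinitely many accumulation points, i.e. $M\subset L(\omega)\cup\{0\}$.
   Context: $\ell^\infty$ is the Banach space of bounded real sequences with the sup norm. For $x\in\ell^\infty$, $L_x$ denotes the set of accumulation points (subsequential limits) of $x$. $\omega$ denotes the cardinality of $\mathbb{N}$, and $L(\omega)=\{x\in\ell^\infty: |L_x|=\omega\}$. *)

From Stdlib Require Import Reals.
Open Scope R_scope.

Definition rseq := nat -> R.

Definition bounded (x : rseq) : Prop :=
  exists B : R, forall n : nat, Rabs (x n) <= B.

Definition sup_close (x y : rseq) (eps : R) : Prop :=
  forall n : nat, Rabs (x n - y n) <= eps.

Definition linear_subspace (M : rseq -> Prop) : Prop :=
  (forall x, M x -> bounded x) /\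
  M (fun _ => 0) /\
  (forall x y, M x -> M y -> M (fun n => x n + y n)) /\
  (forall (c : R) x, M x -> M (fun n => c * x n)).

Definition sup_closed (M : rseq -> Prop) : Prop :=
  forall (u : nat -> rseq) (y : rseq),
    (forall k, M (u k)) -> bounded y ->
    (forall eps, eps > 0 -> exists N, forall k, (k >= N)%nat -> sup_close (u k) y eps) ->
    M y.

(* separable: has a countable subset dense in the sup norm.
   (M is nonempty here, so a countable dense subset can be enumerated by nat.) *)
Definition separable (M : rseq -> Prop) : Prop :=
  exists d : nat -> rseq,
    (forall k, M (d k)) /\
    (forall x, M x -> forall eps, eps > 0 -> exists k, sup_close x (d k) eps).

Definition acc_point (x : rseq) (a : R) : Prop :=
  exists phi : nat -> nat,
    (forall k, (phi k < phi (S k))%nat) /\ Un_cv (fun k => x (phi k)) a.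

Definition countably_infinite (S : R -> Prop) : Prop :=
  exists f : nat -> R,
    (forall i j, f i = f j -> i = j) /\
    (forall a, S a <-> exists i, f i = a).

Definition L_omega (x : rseq) : Prop :=
  bounded x /\ countably_infinite (acc_point x).

(** The positive integers form an infinite binary tree (node n
    has children 2n and 2n+1); a branch b : nat -> bool visits the nodes
    pref b 0 = 1, pref b 1, pref b 2, ...  Let [tree_space] consist of the
    bounded y : nat -> R which
    - concentrate on finitely many branches: for every eps > 0, |y n| <= eps
      for all large n that avoid some finite list of branches, and
    - are Cauchy along every branch.
    This is a closed linear subspace of l^infty, and it contains the indicator
    function of every branch.  M is its image under [embed], which spreads y
    over the coordinates (n, m) as y n * w m, where the weight sequence w
    takes each value 1 + 1/(j+1) infinitely often and stays in [1, 2].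
    - M is linear and closed because [tree_space] is and [embed] is an
      isomorphism onto its image (with constant 2).
    - M is not separable: a diagonal branch, built from any countable family,
      has an embedded indicator at distance > 1/3 from every member.
    - For y <> 0 the values y n * (1 + 1/(j+1)) are infinitely many
      accumulation points of embed y, and every non-zero accumulation point is
      a weight limit times either some y n or the limit of y along one of
      countably many relevant branches; so there are exactly countably many. *)

From Pilot Require Import Defs.
From Stdlib Require Import Reals.
Open Scope R_scope.
From Stdlib Require Import Lra Lia List Cantor Wf_nat.
From Stdlib Require Import Classical ClassicalEpsilon FunctionalExtensionality FinFun.

(** * Branches of the binary tree *)

Fixpoint pref (b : nat -> bool) (k : nat) : nat :=
  match k with
  | O => 1%nat
  | S k => (2 * pref b k + (if b k then 1 else 0))%nat
  end.

Definition on_branch (b : nat -> bool) (n : nat) : Prop := exists k, n = pref b k.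

Lemma pref_pos b k : (1 <= pref b k)%nat.
Proof. induction k; simpl; [lia | destruct (b k); lia]. Qed.

Lemma pref_increasing b k k' : (k < k')%nat -> (pref b k < pref b k')%nat.
Proof.
  assert (Hstep : forall j, (pref b j < pref b (S j))%nat).
  { intros j. pose proof (pref_pos b j). simpl; destruct (b j); lia. }
  induction 1; [apply Hstep | specialize (Hstep m); lia].
Qed.

(** Two branches meeting at a node got there at the same depth, by the same
    moves: the node determines its whole path from the root. *)
Lemma pref_injective b b' : forall k j, pref b k = pref b' j ->
  k = j /\ forall i, (i < k)%nat -> b i = b' i.
Proof.
  induction k; intros j H.
  - destruct j; [split; [auto | intros; lia]|].
    simpl in H. pose proof (pref_pos b' j). destruct (b' j); lia.
  - destruct j.
    + simpl in H. pose proof (pref_pos b k). destruct (b k); lia.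
    + simpl in H.
      assert (Hparent : pref b k = pref b' j /\ b k = b' j).
      { destruct (b k), (b' j); split; auto; lia. }
      destruct Hparent as [E1 E2]. destruct (IHk j E1) as [-> Hagree].
      split; auto. intros i Hi. destruct (Nat.eq_dec i j) as [->|]; auto.
      apply Hagree; lia.
Qed.

Lemma branches_diverge b b' i : b' i <> b i ->
  forall k, (S i <= k)%nat -> ~ on_branch b (pref b' k).
Proof.
  intros Hi k Hk [j Hj]. destruct (pref_injective b' b k j Hj) as [_ Hagree].
  apply Hi, Hagree. lia.
Qed.

Lemma left_child_on b k : on_branch b (2 * pref b k) <-> b k = false.
Proof.
  split.
  - intros [j Hj]. destruct (b k) eqn:Ebk; auto. exfalso.
    assert (Hnext : pref b (S k) = (2 * pref b k + 1)%nat) by (simpl; rewrite Ebk; lia).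
    pose proof (pref_pos b k).
    destruct (Nat.lt_ge_cases j (S k)) as [Hj'|Hj'].
    + destruct (Nat.eq_dec j k) as [->|]; [lia|].
      pose proof (pref_increasing b j k ltac:(lia)). lia.
    + destruct (Nat.eq_dec j (S k)) as [->|]; [lia|].
      pose proof (pref_increasing b (S k) j ltac:(lia)). lia.
  - intros Ebk. exists (S k). simpl. rewrite Ebk. lia.
Qed.

(** * Countability *)

Definition countable (S : R -> Prop) : Prop :=
  exists g : nat -> R, forall a, S a -> exists i, g i = a.

Definition range2 (f : nat -> nat -> R) (a : R) : Prop := exists i j, f i j = a.

Lemma countable_subset (S T : R -> Prop) :
  (forall a, S a -> T a) -> countable T -> countable S.
Proof. intros HST [g Hg]. exists g. auto. Qed.

Lemma countable_union (A B : R -> Prop) :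
  countable A -> countable B -> countable (fun a => A a \/ B a).
Proof.
  intros [gA HA] [gB HB].
  exists (fun i => match fst (Cantor.of_nat i) with
                   | O => gA (snd (Cantor.of_nat i))
                   | _ => gB (snd (Cantor.of_nat i)) end).
  intros a [Ha|Hb].
  - destruct (HA a Ha) as [i <-]. exists (Cantor.to_nat (0%nat, i)).
    rewrite Cantor.cancel_of_to. reflexivity.
  - destruct (HB a Hb) as [i <-]. exists (Cantor.to_nat (1%nat, i)).
    rewrite Cantor.cancel_of_to. reflexivity.
Qed.

Lemma countable_range2 (f : nat -> nat -> R) : countable (range2 f).
Proof.
  exists (fun i => f (fst (Cantor.of_nat i)) (snd (Cantor.of_nat i))).
  intros a [i [j <-]]. exists (Cantor.to_nat (i, j)).
  rewrite Cantor.cancel_of_to. reflexivity.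
Qed.

Lemma least_element (P : nat -> Prop) :
  (exists n, P n) -> exists n, P n /\ forall m, P m -> (n <= m)%nat.
Proof.
  intros H.
  destruct (dec_inh_nat_subset_has_unique_least_element P (fun n => classic (P n)) H)
    as [n [Hn _]].
  eauto.
Qed.

Lemma enumerate_infinite (P : nat -> Prop) :
  (forall K, exists n, (K <= n)%nat /\ P n) ->
  exists e : nat -> nat, (forall i, P (e i)) /\
    (forall i j, (i < j)%nat -> (e i < e j)%nat) /\
    (forall n, P n -> exists i, e i = n).
Proof.
  intros Hinf.
  (* next K is the least element of P above K *)
  destruct (choice (fun K n => ((K <= n)%nat /\ P n) /\
                               forall m, (K <= m)%nat /\ P m -> (n <= m)%nat))
    as [next Hnext].
  { intros K. apply least_element, Hinf. }
  set (e := fix e i := match i with O => next O | S i => next (S (e i)) end).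
  assert (He : forall i, P (e i)) by (destruct i; apply Hnext).
  assert (Hstep : forall i, (e i < e (S i))%nat) by (intros i; apply (Hnext (S (e i)))).
  assert (Hmono : forall i j, (i < j)%nat -> (e i < e j)%nat).
  { induction 1; [apply Hstep | specialize (Hstep m); lia]. }
  exists e. split; [|split]; auto.
  intros n Pn. apply NNPP; intros Hmiss.
  assert (Hbelow : forall i, (e i <= n)%nat).
  { induction i.
    - apply Hnext. split; [lia | auto].
    - apply (Hnext (S (e i))). split; auto.
      destruct (Nat.eq_dec (e i) n); [exfalso; eauto | lia]. }
  assert (Hge : forall i, (i <= e i)%nat).
  { induction i; [lia | specialize (Hstep i); lia]. }
  specialize (Hbelow (S n)). specialize (Hge (S n)). lia.
Qed.

Lemma injective_avoids_list {A : Type} (h : nat -> A) (l : list A) :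
  (forall i j, h i = h j -> i = j) -> exists i, ~ In (h i) l.
Proof.
  intros Hh. apply NNPP; intros Hall.
  assert (Hincl : incl (map h (seq 0 (S (length l)))) l).
  { intros z Hz. apply in_map_iff in Hz. destruct Hz as [i [<- _]].
    apply NNPP; intros Hn; apply Hall; exists i; auto. }
  apply NoDup_incl_length in Hincl.
  - rewrite length_map, length_seq in Hincl; lia.
  - apply Injective_map_NoDup; [intros x y; apply Hh | apply seq_NoDup].
Qed.

Lemma countably_infinite_intro (S : R -> Prop) (h : nat -> R) :
  countable S -> (forall i j, h i = h j -> i = j) -> (forall i, S (h i)) ->
  countably_infinite S.
Proof.
  intros [g Hg] Hh HS.
  set (first_index := fun n => S (g n) /\ forall j, (j < n)%nat -> g j <> g n).
  assert (Hfirst : forall a, S a -> exists n, first_index n /\ g n = a).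
  { intros a Sa.
    destruct (least_element (fun n => g n = a) (Hg a Sa)) as [n [Hn Hleast]].
    exists n. split; auto. split; [rewrite Hn; auto|].
    intros j Hj E. specialize (Hleast j ltac:(congruence)). lia. }
  assert (Hinf : forall K, exists n, (K <= n)%nat /\ first_index n).
  { intros K. destruct (injective_avoids_list h (map g (seq 0 K)) Hh) as [i Hi].
    destruct (Hfirst (h i) (HS i)) as [n [Hn En]]. exists n. split; auto.
    destruct (Nat.le_gt_cases K n) as [|HnK]; auto. exfalso.
    apply Hi. rewrite <- En. apply in_map, in_seq. lia. }
  destruct (enumerate_infinite first_index Hinf) as [e [He [Hmono Hsurj]]].
  exists (fun i => g (e i)). split.
  - intros i j E. destruct (Nat.lt_total i j) as [Hij|[Hij|Hij]]; auto; exfalso.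
    + exact (proj2 (He j) (e i) (Hmono i j Hij) E).
    + exact (proj2 (He i) (e j) (Hmono j i Hij) (eq_sym E)).
  - intros a. split.
    + intros Sa. destruct (Hfirst a Sa) as [n [Hn <-]].
      destruct (Hsurj n Hn) as [i <-]. eauto.
    + intros [i <-]. apply He.
Qed.

Lemma finite_pigeonhole {A : Type} (l : list A) (Q : A -> R -> nat -> Prop) :
  (forall a e e' K K', e <= e' -> (K' <= K)%nat -> Q a e K -> Q a e' K') ->
  (forall e, e > 0 -> forall K, exists a, In a l /\ Q a e K) ->
  exists a, In a l /\ forall e, e > 0 -> forall K, Q a e K.
Proof.
  intros Hmono. induction l as [|a l IH]; intros H.
  - destruct (H 1 ltac:(lra) 0%nat) as [a [[] _]].
  - destruct (classic (forall e, e > 0 -> forall K, Q a e K)) as [Ha|Ha].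
    + exists a. split; [left | ]; auto.
    + apply not_all_ex_not in Ha. destruct Ha as [e0 Ha].
      apply imply_to_and in Ha. destruct Ha as [He0 Ha].
      apply not_all_ex_not in Ha. destruct Ha as [K0 Ha].
      destruct IH as [a' [Ha' Hq]].
      { intros e He K.
        destruct (H (Rmin e e0) ltac:(apply Rmin_glb_lt; lra) (Nat.max K K0))
          as [a' [[<-|Hin] Hq]].
        - exfalso. apply Ha. eapply Hmono; [apply Rmin_r | | exact Hq]. lia.
        - exists a'. split; auto. eapply Hmono; [apply Rmin_l | | exact Hq]. lia. }
      exists a'. split; [right | ]; auto.
Qed.

(** * The weights *)

(** The possible weights: [Wt 0 = 1] and [Wt (S j) = 1 + 1/(j+1)]; the weight
    sequence [w] takes every value [Wt (S j)] infinitely often. *)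
Definition Wt (t : nat) : R := match t with O => 1 | S j => 1 + / (INR j + 1) end.
Definition w (m : nat) : R := Wt (S (fst (Cantor.of_nat m))).

Lemma inv_succ_bounds j : 0 < / (INR j + 1) <= 1.
Proof.
  pose proof (pos_INR j). split; [apply Rinv_0_lt_compat; lra|].
  rewrite <- Rinv_1. apply Rinv_le_contravar; lra.
Qed.

Lemma w_bounds m : 1 <= w m <= 2.
Proof. unfold w. simpl. pose proof (inv_succ_bounds (fst (Cantor.of_nat m))). lra. Qed.

Lemma w_zero : w 0 = 2.
Proof. unfold w. simpl. lra. Qed.

Lemma w_pair j k : w (Cantor.to_nat (j, k)) = Wt (S j).
Proof. unfold w. rewrite Cantor.cancel_of_to. reflexivity. Qed.

Lemma Rabs_mul_weight c m : Rabs (c * w m) <= 2 * Rabs c.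
Proof.
  pose proof (w_bounds m). pose proof (Rabs_pos c).
  rewrite Rabs_mult, (Rabs_right (w m)) by lra. nra.
Qed.

Lemma Wt_succ_injective i j : Wt (S i) = Wt (S j) -> i = j.
Proof.
  simpl. intros E. apply INR_eq.
  pose proof (inv_succ_bounds i). pose proof (inv_succ_bounds j).
  assert (INR i + 1 = INR j + 1); [|lra].
  rewrite <- (Rinv_inv (INR i + 1)), <- (Rinv_inv (INR j + 1)). f_equal. lra.
Qed.

Lemma eq_of_close a b : (forall e, e > 0 -> Rabs (a - b) <= e) -> a = b.
Proof.
  intros H. destruct (Req_dec (a - b) 0) as [|Hne]; [lra|].
  pose proof (Rabs_pos_lt _ Hne). specialize (H (Rabs (a - b) / 2) ltac:(lra)). lra.
Qed.

(** The closure of the range of [w] consists of weights: a limit other than 1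
    is approached only by finitely many of the values [Wt (S j)]. *)
Lemma adherent_weights_are_weights t :
  (forall e, e > 0 -> exists m, Rabs (w m - t) < e) -> exists s, Wt s = t.
Proof.
  intros H. destruct (Req_dec t 1) as [->|Ht]; [exists 0%nat; reflexivity|].
  assert (Hd : Rabs (t - 1) > 0) by (apply Rabs_pos_lt; lra).
  destruct (archimed_cor1 (Rabs (t - 1) / 2) ltac:(lra)) as [J [HJ HJ0]].
  assert (Hsmall : forall j, Rabs (Wt (S j) - t) < Rabs (t - 1) / 2 -> (j < J)%nat).
  { intros j Hj. destruct (Nat.lt_ge_cases j J) as [|HjJ]; auto. exfalso.
    assert (/ (INR j + 1) <= / INR J).
    { apply Rinv_le_contravar; [apply lt_0_INR; lia|]. apply le_INR in HjJ. lra. }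
    pose proof (inv_succ_bounds j).
    assert (Rabs (t - 1) <= Rabs (Wt (S j) - t) + / (INR j + 1)); [|lra].
    replace (t - 1) with (- (Wt (S j) - t) + / (INR j + 1)) by (simpl; ring).
    eapply Rle_trans; [apply Rabs_triang|].
    rewrite Rabs_Ropp, (Rabs_right (/ (INR j + 1))) by lra. lra. }
  destruct (finite_pigeonhole (seq 0 J) (fun j e (_ : nat) => Rabs (Wt (S j) - t) < e))
    as [j [_ Hj]].
  - intros; lra.
  - intros e He _.
    destruct (H (Rmin e (Rabs (t - 1) / 2))) as [m Hm]; [apply Rmin_glb_lt; lra|].
    pose proof (Rmin_l e (Rabs (t - 1) / 2)). pose proof (Rmin_r e (Rabs (t - 1) / 2)).
    exists (fst (Cantor.of_nat m)). unfold w in Hm.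
    split; [apply in_seq; split; [lia | apply Hsmall; lra] | lra].
  - exists (S j). apply eq_of_close. intros e He. left. apply Hj; auto.
Qed.

Lemma adherent_scaled_weights c a : a <> 0 ->
  (forall e, e > 0 -> exists m, Rabs (c * w m - a) < e) -> exists s, a = c * Wt s.
Proof.
  intros Ha H. assert (Hc : c <> 0).
  { intros ->. destruct (H (Rabs a) (Rabs_pos_lt _ Ha)) as [m Hm].
    replace (0 * w m - a) with (- a) in Hm by ring. rewrite Rabs_Ropp in Hm. lra. }
  pose proof (Rabs_pos_lt _ Hc).
  destruct (adherent_weights_are_weights (a / c)) as [s Hs].
  - intros e He.
    destruct (H (e * Rabs c) ltac:(apply Rmult_lt_0_compat; lra)) as [m Hm].
    exists m. replace (w m - a / c) with ((c * w m - a) * / c) by (field; auto).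
    rewrite Rabs_mult, Rabs_inv.
    apply Rmult_lt_reg_r with (Rabs c); auto.
    rewrite Rmult_assoc, Rinv_l by lra. lra.
  - exists s. rewrite Hs. field. auto.
Qed.

(** * The tree space *)

Definition concentrated (y : rseq) (eps : R) (L : list (nat -> bool)) (N : nat) : Prop :=
  forall n, (N <= n)%nat -> (forall b, In b L -> ~ on_branch b n) -> Rabs (y n) <= eps.

Definition concentrates (y : rseq) : Prop :=
  forall eps, eps > 0 -> exists L N, concentrated y eps L N.

Definition branch_cauchy (y : rseq) : Prop :=
  forall b eps, eps > 0 -> exists K, forall k k', (K <= k)%nat -> (K <= k')%nat ->
    Rabs (y (pref b k) - y (pref b k')) <= eps.

Definition tree_space (y : rseq) : Prop :=
  Defs.bounded y /\ concentrates y /\ branch_cauchy y.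

Lemma tree_space_add y1 y2 :
  tree_space y1 -> tree_space y2 -> tree_space (fun n => y1 n + y2 n).
Proof.
  intros [[B1 HB1] [P1 Q1]] [[B2 HB2] [P2 Q2]]. split; [|split].
  - exists (B1 + B2). intros n. eapply Rle_trans; [apply Rabs_triang|].
    specialize (HB1 n); specialize (HB2 n); lra.
  - intros e He.
    destruct (P1 (e/2) ltac:(lra)) as [L1 [N1 H1]].
    destruct (P2 (e/2) ltac:(lra)) as [L2 [N2 H2]].
    exists (L1 ++ L2), (Nat.max N1 N2). intros n Hn Hoff.
    eapply Rle_trans; [apply Rabs_triang|].
    assert (Rabs (y1 n) <= e/2).
    { apply H1; [lia|]. intros b Hb; apply Hoff, in_or_app; auto. }
    assert (Rabs (y2 n) <= e/2).
    { apply H2; [lia|]. intros b Hb; apply Hoff, in_or_app; auto. }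
    lra.
  - intros b e He.
    destruct (Q1 b (e/2) ltac:(lra)) as [K1 H1].
    destruct (Q2 b (e/2) ltac:(lra)) as [K2 H2].
    exists (Nat.max K1 K2). intros k k' Hk Hk'.
    specialize (H1 k k' ltac:(lia) ltac:(lia)). specialize (H2 k k' ltac:(lia) ltac:(lia)).
    set (p := pref b k) in *. set (p' := pref b k') in *.
    replace (y1 p + y2 p - (y1 p' + y2 p')) with ((y1 p - y1 p') + (y2 p - y2 p')) by ring.
    eapply Rle_trans; [apply Rabs_triang|]. lra.
Qed.

Lemma tolerance_for_factor c e : e > 0 -> exists e', e' > 0 /\ Rabs c * e' <= e.
Proof.
  intros He. pose proof (Rabs_pos c). exists (e / (Rabs c + 1)).
  split; [apply Rdiv_lt_0_compat; lra|].
  apply Rle_trans with ((Rabs c + 1) * (e / (Rabs c + 1))).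
  - apply Rmult_le_compat_r; [apply Rlt_le, Rdiv_lt_0_compat|]; lra.
  - right. field. lra.
Qed.

Lemma tree_space_scale c y : tree_space y -> tree_space (fun n => c * y n).
Proof.
  intros [[B HB] [P Q]]. pose proof (Rabs_pos c) as Hc. split; [|split].
  - exists (Rabs c * B). intros n. rewrite Rabs_mult. apply Rmult_le_compat_l; auto.
  - intros e He. destruct (tolerance_for_factor c e He) as [e' [He' Hce]].
    destruct (P e' He') as [L [N HP]]. exists L, N. intros n Hn Hoff.
    rewrite Rabs_mult. specialize (HP n Hn Hoff).
    eapply Rle_trans; [apply Rmult_le_compat_l|]; eauto.
  - intros b e He. destruct (tolerance_for_factor c e He) as [e' [He' Hce]].
    destruct (Q b e' He') as [K HQ]. exists K. intros k k' Hk Hk'.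
    rewrite <- Rmult_minus_distr_l, Rabs_mult. specialize (HQ k k' Hk Hk').
    eapply Rle_trans; [apply Rmult_le_compat_l|]; eauto.
Qed.

Lemma tree_space_closed z : Defs.bounded z ->
  (forall e, e > 0 -> exists v, tree_space v /\ forall n, Rabs (v n - z n) <= e) ->
  tree_space z.
Proof.
  intros Hb H. split; [auto | split].
  - intros e He. destruct (H (e/2) ltac:(lra)) as [v [[_ [P _]] Hv]].
    destruct (P (e/2) ltac:(lra)) as [L [N HP]]. exists L, N. intros n Hn Hoff.
    specialize (HP n Hn Hoff). specialize (Hv n).
    replace (z n) with (v n - (v n - z n)) by ring.
    eapply Rle_trans; [apply Rabs_triang|]. rewrite Rabs_Ropp. lra.
  - intros b e He. destruct (H (e/3) ltac:(lra)) as [v [[_ [_ Q]] Hv]].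
    destruct (Q b (e/3) ltac:(lra)) as [K HQ]. exists K. intros k k' Hk Hk'.
    specialize (HQ k k' Hk Hk'). pose proof (Hv (pref b k)). pose proof (Hv (pref b k')).
    set (p := pref b k) in *. set (p' := pref b k') in *.
    replace (z p - z p') with ((v p - v p') - (v p - z p) + (v p' - z p')) by ring.
    eapply Rle_trans; [apply Rabs_triang|].
    eapply Rle_trans; [apply Rplus_le_compat_r, Rabs_triang|]. rewrite Rabs_Ropp. lra.
Qed.

Definition branch_limit (y : rseq) (b : nat -> bool) : R :=
  epsilon (inhabits 0) (fun l => Un_cv (fun k => y (pref b k)) l).

Lemma branch_limit_spec y b :
  branch_cauchy y -> Un_cv (fun k => y (pref b k)) (branch_limit y b).
Proof.
  intros Hcau. unfold branch_limit. apply epsilon_spec.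
  destruct (R_complete (fun k => y (pref b k))) as [l Hl]; [|exists l; exact Hl].
  intros e He. destruct (Hcau b (e/2) ltac:(lra)) as [K HK]. exists K.
  intros k k' Hk Hk'. unfold R_dist. specialize (HK k k' Hk Hk'). lra.
Qed.

Definition branch_indicator (b : nat -> bool) : rseq :=
  fun n => if excluded_middle_informative (on_branch b n) then 1 else 0.

Lemma branch_indicator_tree_space b : tree_space (branch_indicator b).
Proof.
  unfold branch_indicator. split; [|split].
  - exists 1. intros n.
    destruct excluded_middle_informative; [rewrite Rabs_R1 | rewrite Rabs_R0]; lra.
  - intros e He. exists (b :: nil), 0%nat. intros n _ Hoff.
    destruct excluded_middle_informative as [Hon|_].
    + exfalso. exact (Hoff b (or_introl eq_refl) Hon).
    + rewrite Rabs_R0. lra.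
  - intros b' e He. destruct (classic (b' = b)) as [->|Hne].
    + exists 0%nat. intros k k' _ _.
      do 2 (destruct excluded_middle_informative as [_|Hoff];
            [|exfalso; apply Hoff; eexists; reflexivity]).
      rewrite Rminus_diag, Rabs_R0. lra.
    + (* beyond the split point of b' and b, the branch b' never meets b *)
      destruct (not_all_ex_not _ (fun i => b' i = b i)
                  (fun H => Hne (functional_extensionality _ _ H))) as [i Hi].
      exists (S i). intros k k' Hk Hk'.
      do 2 (destruct excluded_middle_informative as [Hon|_];
            [exfalso; revert Hon; apply (branches_diverge b b' i Hi); assumption|]).
      rewrite Rminus_diag, Rabs_R0. lra.
Qed.

(** * The embedding and the subspace M *)

Definition embed (y : rseq) : rseq :=
  fun p => y (fst (Cantor.of_nat p)) * w (snd (Cantor.of_nat p)).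

Definition M_space (x : rseq) : Prop :=
  exists y, tree_space y /\ forall p, x p = embed y p.

Lemma embed_pair y n m : embed y (Cantor.to_nat (n, m)) = y n * w m.
Proof. unfold embed. rewrite Cantor.cancel_of_to. reflexivity. Qed.

Lemma embed_bounded y : Defs.bounded y -> Defs.bounded (embed y).
Proof.
  intros [B HB]. exists (2 * B). intros p. unfold embed.
  eapply Rle_trans; [apply Rabs_mul_weight|]. specialize (HB (fst (Cantor.of_nat p))). lra.
Qed.

Lemma embed_close v z e :
  (forall n, Rabs (v n - z n) <= e) -> forall p, Rabs (embed v p - embed z p) <= 2 * e.
Proof.
  intros H p. unfold embed. rewrite <- Rmult_minus_distr_r.
  eapply Rle_trans; [apply Rabs_mul_weight|]. specialize (H (fst (Cantor.of_nat p))). lra.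
Qed.

Lemma M_linear : linear_subspace M_space.
Proof.
  split; [|split; [|split]].
  - intros x [y [[Hb _] Ex]]. destruct (embed_bounded y Hb) as [B HB].
    exists B. intros p. rewrite Ex. apply HB.
  - exists (fun _ => 0). split; [|intros p; unfold embed; ring].
    split; [exists 0; intros; unfold Rabs; destruct Rcase_abs; lra | split].
    + intros e He. exists nil, 0%nat. intros n _ _. rewrite Rabs_R0. lra.
    + intros b e He. exists 0%nat. intros k k' _ _.
      rewrite Rminus_diag, Rabs_R0. lra.
  - intros x1 x2 [y1 [H1 E1]] [y2 [H2 E2]]. exists (fun n => y1 n + y2 n).
    split; [apply tree_space_add; auto|]. intros p. rewrite E1, E2. unfold embed. ring.
  - intros c x [y [H E]]. exists (fun n => c * y n).
    split; [apply tree_space_scale; auto|]. intros p. rewrite E. unfold embed. ring.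
Qed.

Lemma M_closed : sup_closed M_space.
Proof.
  intros u x Hu [B HB] Hlim.
  assert (Happrox : forall e, e > 0 ->
            exists v, tree_space v /\ forall p, Rabs (embed v p - x p) <= e).
  { intros e He. destruct (Hlim e He) as [N HN]. destruct (Hu N) as [v [Hv Ev]].
    exists v. split; auto. intros p. rewrite <- Ev. apply (HN N (le_n N)). }
  (* the preimage is read off the column m = 0, where the weight is 2 *)
  set (z := fun n => x (Cantor.to_nat (n, 0%nat)) / 2).
  assert (Hz : forall e, e > 0 -> exists v, tree_space v /\
            (forall n, Rabs (v n - z n) <= e) /\ forall p, Rabs (embed v p - x p) <= e).
  { intros e He. destruct (Happrox e He) as [v [Hv Hvx]].
    exists v. split; [auto | split; auto]. intros n.
    specialize (Hvx (Cantor.to_nat (n, 0%nat))). rewrite embed_pair, w_zero in Hvx.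
    unfold z. replace (v n - _ / 2) with ((v n * 2 - x (Cantor.to_nat (n, 0%nat))) / 2) by field.
    unfold Rdiv. rewrite Rabs_mult, (Rabs_right (/ 2)) by lra. lra. }
  assert (Hzt : tree_space z).
  { apply tree_space_closed.
    - exists B. intros n. unfold z, Rdiv. rewrite Rabs_mult, (Rabs_right (/ 2)) by lra.
      specialize (HB (Cantor.to_nat (n, 0%nat))).
      pose proof (Rabs_pos (x (Cantor.to_nat (n, 0%nat)))). lra.
    - intros e He. destruct (Hz e He) as [v [Hv [Hvz _]]]. eauto. }
  exists z. split; auto. intros p. apply eq_of_close. intros e He.
  destruct (Hz (e/3) ltac:(lra)) as [v [_ [Hvz Hvx]]].
  pose proof (embed_close v z (e/3) Hvz p). specialize (Hvx p).
  replace (x p - embed z p) with (- (embed v p - x p) + (embed v p - embed z p)) by ring.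
  eapply Rle_trans; [apply Rabs_triang|]. rewrite Rabs_Ropp. lra.
Qed.

(** * Non-separability *)

Fixpoint diag_node (d : nat -> rseq) (k : nat) : nat :=
  match k with
  | O => 1%nat
  | S k => (2 * diag_node d k +
            (if Rle_dec 1 (d k (Cantor.to_nat (2 * diag_node d k, 0)%nat)) then 1 else 0))%nat
  end.

Definition diag_branch (d : nat -> rseq) (k : nat) : bool :=
  if Rle_dec 1 (d k (Cantor.to_nat (2 * diag_node d k, 0)%nat)) then true else false.

Lemma pref_diag_branch d k : pref (diag_branch d) k = diag_node d k.
Proof.
  induction k; simpl; auto. rewrite IHk. unfold diag_branch. destruct Rle_dec; reflexivity.
Qed.

(** The embedded indicator of the diagonal branch of [d] is at distance
    > 1/3 from every [d k], witnessed at the coordinate [(2q, 0)]. *)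
Lemma M_not_separable : ~ separable M_space.
Proof.
  intros [d [_ Hdense]].
  set (b := diag_branch d).
  assert (Hx : M_space (embed (branch_indicator b))).
  { exists (branch_indicator b). split; [apply branch_indicator_tree_space | reflexivity]. }
  destruct (Hdense _ Hx (1/3) ltac:(lra)) as [k Hk].
  pose proof (left_child_on b k) as Hleft.
  set (q := pref b k) in Hleft.
  specialize (Hk (Cantor.to_nat (2 * q, 0)%nat)).
  rewrite embed_pair, w_zero in Hk.
  set (c := d k (Cantor.to_nat (2 * q, 0)%nat)) in Hk.
  assert (Hturn : b k = true <-> 1 <= c).
  { unfold c, q, b. rewrite pref_diag_branch. unfold diag_branch.
    destruct Rle_dec; split; intros; auto; try congruence; contradiction. }
  unfold branch_indicator in Hk. destruct excluded_middle_informative as [Hon|Hoff].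
  - apply Hleft in Hon.
    assert (c < 1) by (apply Rnot_le_lt; intros Hc; apply Hturn in Hc; congruence).
    pose proof (Rle_abs (1 * 2 - c)). lra.
  - assert (1 <= c).
    { apply Hturn. destruct (b k) eqn:Ebk; auto. exfalso. apply Hoff, Hleft; auto. }
    pose proof (Rle_abs (- (0 * 2 - c))). rewrite Rabs_Ropp in *. lra.
Qed.

(** * Accumulation points *)

Definition in_value_closure (y : rseq) (a : R) : Prop :=
  forall e, e > 0 -> exists n m, Rabs (y n * w m - a) < e.

Lemma acc_point_in_value_closure y a : acc_point (embed y) a -> in_value_closure y a.
Proof.
  intros [phi [_ Hcv]] e He. destruct (Hcv e He) as [N HN].
  exists (fst (Cantor.of_nat (phi N))), (snd (Cantor.of_nat (phi N))).
  exact (HN N (le_n N)).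
Qed.

Lemma to_nat_increasing a m m' :
  (m < m')%nat -> (Cantor.to_nat (a, m) < Cantor.to_nat (a, m'))%nat.
Proof. pose proof (Cantor.to_nat_spec a m). pose proof (Cantor.to_nat_spec a m'). nia. Qed.

(** Every value [y n * Wt (S j)] is attained infinitely often by [embed y],
    at the coordinates [(n, (j, k))], k in nat. *)
Lemma weighted_values_are_acc_points y n j : acc_point (embed y) (y n * Wt (S j)).
Proof.
  exists (fun k => Cantor.to_nat (n, Cantor.to_nat (j, k))). split.
  - intros k. apply to_nat_increasing, to_nat_increasing. lia.
  - intros e He. exists 0%nat. intros k _. unfold R_dist.
    rewrite embed_pair, w_pair, Rminus_diag, Rabs_R0. lra.
Qed.

(** Countably many branches carry all the concentration witnesses of [y]:
    choose witnesses for the tolerances 1/(k+1) and enumerate their lists. *)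
Lemma relevant_branches y : concentrates y ->
  exists br : nat -> (nat -> bool), forall eps, eps > 0 ->
    exists L N, concentrated y eps L N /\ forall b, In b L -> exists r, br r = b.
Proof.
  intros Hconc.
  destruct (choice (fun (k : nat) (LN : list (nat -> bool) * nat) =>
                      concentrated y (/ (INR k + 1)) (fst LN) (snd LN))) as [LN HLN].
  { intros k. destruct (Hconc (/ (INR k + 1))) as [L [N H]]; [apply inv_succ_bounds|].
    exists (L, N). exact H. }
  exists (fun r => nth (snd (Cantor.of_nat r)) (fst (LN (fst (Cantor.of_nat r)))) (fun _ => true)).
  intros eps He. destruct (archimed_cor1 eps He) as [k [Hk Hk0]].
  exists (fst (LN k)), (snd (LN k)). split.
  - intros n Hn Hoff. apply Rle_trans with (/ (INR k + 1)); [exact (HLN k n Hn Hoff)|].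
    left. eapply Rle_lt_trans; [|exact Hk].
    apply Rinv_le_contravar; [apply lt_0_INR; lia | lra].
  - intros b Hb. destruct (In_nth _ _ (fun _ => true) Hb) as [i [_ Hi]].
    exists (Cantor.to_nat (k, i)). rewrite Cantor.cancel_of_to. exact Hi.
Qed.

Lemma branch_limit_adherent y b a : branch_cauchy y ->
  (forall e K, e > 0 -> exists n m, (K <= n)%nat /\ on_branch b n /\ Rabs (y n * w m - a) < e) ->
  forall e, e > 0 -> exists m, Rabs (branch_limit y b * w m - a) < e.
Proof.
  intros Hcau Hb e He.
  destruct (branch_limit_spec y b Hcau (e/4) ltac:(lra)) as [K HK].
  destruct (Hb (e/2) (pref b K) ltac:(lra)) as [n [m [Hn [[j ->] Hm]]]].
  assert (HKj : (K <= j)%nat).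
  { destruct (Nat.le_gt_cases K j) as [|Hjk]; auto.
    pose proof (pref_increasing b _ _ Hjk). lia. }
  specialize (HK j HKj). unfold R_dist in HK. rewrite Rabs_minus_sym in HK.
  exists m. pose proof (Rabs_mul_weight (branch_limit y b - y (pref b j)) m).
  replace (branch_limit y b * w m - a)
    with ((branch_limit y b - y (pref b j)) * w m + (y (pref b j) * w m - a)) by ring.
  eapply Rle_lt_trans; [apply Rabs_triang|]. lra.
Qed.

(** Values [y n * w m]
    close to [a] are large, so late ones lie on the branches of a
    concentration witness; one branch gets them infinitely often. *)
Lemma adherent_late_rows y a eps L N :
  branch_cauchy y -> a <> 0 -> 4 * eps < Rabs a -> concentrated y eps L N ->
  (forall e K, e > 0 -> exists n m, (K <= n)%nat /\ Rabs (y n * w m - a) < e) ->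
  exists b s, In b L /\ a = branch_limit y b * Wt s.
Proof.
  intros Hcau Ha Heps Hconc Hlate. pose proof (Rabs_pos_lt a Ha).
  destruct (finite_pigeonhole L (fun b e K => exists n m,
              (K <= n)%nat /\ on_branch b n /\ Rabs (y n * w m - a) < e)) as [b [Hb Hbranch]].
  - intros b e e' K K' Hee' HKK' [n [m [Hn [Hon Hm]]]].
    exists n, m. repeat split; auto; lia || lra.
  - intros e He K.
    destruct (Hlate (Rmin e (Rabs a / 2)) (Nat.max K N)) as [n [m [Hn Hm]]];
      [apply Rmin_glb_lt; lra|].
    pose proof (Rmin_l e (Rabs a / 2)). pose proof (Rmin_r e (Rabs a / 2)).
    assert (Hon : exists b, In b L /\ on_branch b n).
    { apply NNPP; intros Hnone.
      assert (Rabs (y n) <= eps) by (apply Hconc; [lia | intros b Hb Hon; apply Hnone; eauto]).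
      pose proof (Rabs_mul_weight (y n) m). pose proof (Rabs_triang_inv a (y n * w m)).
      rewrite Rabs_minus_sym in Hm. lra. }
    destruct Hon as [b [Hb Hon]]. exists b. split; auto.
    exists n, m. repeat split; auto; lia || lra.
  - destruct (adherent_scaled_weights (branch_limit y b) a Ha) as [s Hs].
    + exact (branch_limit_adherent y b a Hcau (fun e K He => Hbranch e He K)).
    + exists b, s. auto.
Qed.

(** Case 2: only finitely many rows come close to [a]; one of them, [n],
    approaches [a] arbitrarily well, so [a] is [y n] times a weight. *)
Lemma adherent_early_rows y a e0 K0 : a <> 0 -> e0 > 0 -> in_value_closure y a ->
  (forall n m, (K0 <= n)%nat -> e0 <= Rabs (y n * w m - a)) ->
  exists n s, a = y n * Wt s.
Proof.
  intros Ha He0 Hadh Hfar.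
  destruct (finite_pigeonhole (seq 0 K0)
              (fun n e (_ : nat) => exists m, Rabs (y n * w m - a) < e)) as [n [_ Hn]].
  - intros n e e' K K' Hee' _ [m Hm]. exists m. lra.
  - intros e He _. destruct (Hadh (Rmin e e0)) as [n [m Hm]]; [apply Rmin_glb_lt; lra|].
    pose proof (Rmin_l e e0). pose proof (Rmin_r e e0).
    exists n. split; [|exists m; lra].
    apply in_seq. destruct (Nat.lt_ge_cases n K0) as [|HK]; [lia|].
    specialize (Hfar n m HK). lra.
  - destruct (adherent_scaled_weights (y n) a Ha) as [s Hs].
    + intros e He. exact (Hn e He 0%nat).
    + exists n, s. exact Hs.
Qed.

Lemma adherent_classification y a eps L N :
  branch_cauchy y -> a <> 0 -> 4 * eps < Rabs a -> concentrated y eps L N ->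
  in_value_closure y a ->
  (exists n s, a = y n * Wt s) \/ (exists b s, In b L /\ a = branch_limit y b * Wt s).
Proof.
  intros Hcau Ha Heps Hconc Hadh.
  destruct (classic (forall e K, e > 0 -> exists n m,
                       (K <= n)%nat /\ Rabs (y n * w m - a) < e)) as [Hlate|Hearly].
  - right. eapply adherent_late_rows; eauto.
  - left. apply not_all_ex_not in Hearly. destruct Hearly as [e0 Hearly].
    apply not_all_ex_not in Hearly. destruct Hearly as [K0 Hearly].
    apply imply_to_and in Hearly. destruct Hearly as [He0 Hearly].
    apply (adherent_early_rows y a e0 K0); auto.
    intros n m HK. apply Rnot_lt_le. intros Hlt. apply Hearly. eauto.
Qed.

Lemma acc_points_countable y : tree_space y -> countable (acc_point (embed y)).
Proof.
  intros [_ [Hconc Hcau]]. destruct (relevant_branches y Hconc) as [br Hbr].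
  apply (countable_subset _ (fun a => a = 0 \/
           (range2 (fun n s => y n * Wt s) a \/
            range2 (fun r s => branch_limit y (br r) * Wt s) a))).
  - intros a Hacc. destruct (Req_dec a 0) as [|Ha]; [left; auto | right].
    pose proof (Rabs_pos_lt a Ha).
    destruct (Hbr (Rabs a / 8) ltac:(lra)) as [L [N [Hc HL]]].
    destruct (adherent_classification y a (Rabs a / 8) L N) as [[n [s ->]]|[b [s [Hb ->]]]];
      auto; try lra.
    + apply acc_point_in_value_closure; auto.
    + left. exists n, s. reflexivity.
    + right. destruct (HL b Hb) as [r <-]. exists r, s. reflexivity.
  - apply countable_union; [exists (fun _ : nat => 0); intros a ->; exists 0%nat; reflexivity |].
    apply countable_union; apply countable_range2.
Qed.

Lemma embed_L_omega y : tree_space y -> (exists n, y n <> 0) -> L_omega (embed y).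
Proof.
  intros Hy [n Hn]. split; [apply embed_bounded, Hy|].
  apply (countably_infinite_intro _ (fun j => y n * Wt (S j))).
  - apply acc_points_countable, Hy.
  - intros i j E. apply Wt_succ_injective. apply Rmult_eq_reg_l with (y n); auto.
  - intros j. apply weighted_values_are_acc_points.
Qed.

Theorem proposition3p2 :
  exists M : rseq -> Prop,
    linear_subspace M /\ sup_closed M /\ ~ separable M /\
    (forall x : rseq, M x -> (exists n, x n <> 0) -> L_omega x).
Proof.
  exists M_space. split; [apply M_linear | split; [apply M_closed | split; [apply M_not_separable |]]].
  intros x [y [Hy Ex]] [p Hp].
  assert (Hx : x = embed y) by (apply functional_extensionality; exact Ex). subst x.
  apply embed_L_omega; auto.
  exists (fst (Cantor.of_nat p)). intros Hzero. apply Hp. unfold embed. rewrite Hzero. ring.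
Qed.
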